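(* For every integer $n>61$ there is no balanced permutation sequence of length $n$. In particular, only finitely many positive integers $n$ admit a balanced permutation sequence of length $n$.
   Context: Let $n$ be a positive integer, $N$ a set of $n$ players and $[n]=\{1,\ldots,n\}$ a set of $n$ items. A permutation sequence of length $n$ is an ordered tuple $(\pi_1,\ldots,\pi_n)$ of bijections $\pi_t : N\to[n]$; on day $t$ player $i$ receives item $\pi_t(i)$. For $t\in[n]$ and $i\in N$, $Z_i^t$ is the multiset $\{\pi_1(i),\ldots,\pi_t(i)\}$, and for $j\in[t]$, $Z_i^t[j]$ is the $j$-th smallest element of $Z_i^t$ (counted with multiplicity). The sequence is called balanced if for every $t\in[n]$, every $i\in N$ and every $j\in[t]$: $Z_i^t[j]\le \lceil jn/t\rceil$. *)

From mathcomp Require Import all_boot all_order all_fingroup.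
Set Implicit Arguments. Unset Strict Implicit. Unset Printing Implicit Defensive.

(* Players N and items [n] = {1..n} are both encoded by 'I_n; the ordinal
   k : 'I_n stands for item k+1.  A permutation sequence of length n is a
   function from days 'I_n (day d stands for day d+1) to bijections
   {perm 'I_n}. *)
Definition perm_seq (n : nat) := 'I_n -> {perm 'I_n}.

Definition Z (n : nat) (pi : perm_seq n) (t : nat) (i : 'I_n) : seq nat :=
  map (fun d : 'I_n => (pi d i).+1) (filter (fun d : 'I_n => d < t) (enum 'I_n)).

Definition Zth (n : nat) (pi : perm_seq n) (t : nat) (i : 'I_n) (j : nat) : nat :=
  nth 0 (sort leq (Z pi t i)) j.-1.

Definition ceil_div (a b : nat) : nat := (a + b.-1) %/ b.

Definition balanced (n : nat) (pi : perm_seq n) : Prop :=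
  forall (t : nat), 1 <= t <= n ->
  forall (i : 'I_n) (j : nat), 1 <= j <= t ->
    Zth pi t i j <= ceil_div (j * n) t.

From mathcomp Require Import all_boot all_order all_fingroup.
From mathcomp Require Import zify.
Set Implicit Arguments. Unset Strict Implicit. Unset Printing Implicit Defensive.

(* Write a := ceil(n/4), b := ceil(n/3), w := ceil(2n/4).  Balance at (t, j) =
   (2, 1) and (4, 1) forces every player to get an item <= ceil(n/2) <= w on
   days 1-2 and an item <= a on days 1-4.  Hence a player who receives an
   item in (a, b] on day 3 either has two items <= b after three days or three
   items <= w after four days.  Since each day is a permutation, the numbers of
   such excess players are at most 3b - n and 4w - 2n, i.e. bounded by a
   constant, whereas b - a players receive an item in (a, b] on day 3; this is
   impossible once b - a > 5, that is for n > 61. *)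

Lemma count_enum_sum (T : finType) (q : pred T) :
  count q (enum T) = \sum_(x : T) q x.
Proof.
rewrite -sum1_count big_enum_cond big_mkcond /=.
by apply: eq_bigr => x _; case: (q x).
Qed.

Lemma sum_ord_lt n V : \sum_(x < n) (x < V) = minn n V.
Proof.
elim: n => [|n IHn]; first by rewrite big_ord0 min0n.
by rewrite big_ord_recr /= IHn; case: ltnP => ?; lia.
Qed.

Lemma sum_perm_lt n (p : {perm 'I_n}) V : \sum_(x < n) (p x < V) = minn n V.
Proof.
rewrite -sum_ord_lt.
exact: esym (reindex_inj (P := predT) (F := fun x : 'I_n => (x < V) : nat) perm_inj).
Qed.

Lemma sum_gt_le (I : finType) (S : I -> nat) j :
  (forall i, j <= S i) -> \sum_i (j < S i) <= \sum_i S i - #|I| * j.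
Proof.
move=> geS; have : \sum_i (j + (j < S i)) <= \sum_i S i.
  by apply: leq_sum => i _; have := geS i; case: ltnP => /=; lia.
by rewrite big_split /= sum_nat_const cardT -cardE; lia.
Qed.

Lemma sorted_nth_le_count (s : seq nat) j V :
  sorted leq s -> 0 < j <= size s -> nth 0 s j.-1 <= V ->
  j <= count (fun v => v <= V) s.
Proof.
move=> s_sorted /andP [j_gt0 j_le] nth_le.
have take_le : all (fun v => v <= V) (take j s).
  apply/(all_nthP 0) => k; rewrite size_take_min => k_lt.
  rewrite nth_take; last by lia.
  apply: leq_trans nth_le.
  by apply: (sorted_leq_nth leq_trans leqnn 0 s_sorted); rewrite ?inE; lia.
rewrite -(cat_take_drop j s) count_cat.
move: take_le; rewrite all_count => /eqP ->.
by rewrite size_take_min; lia.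
Qed.

Section LowCount.

Variables (n : nat) (pi : perm_seq n).

(* Items are 0-based here: [pi d i < V] means that item [pi d i + 1 <= V]. *)
Definition low_count (i : 'I_n) (t V : nat) : nat :=
  \sum_(d < n) ((d < t) && (pi d i < V)).

Lemma count_Z_le t i V : count (fun v => v <= V) (Z pi t i) = low_count i t V.
Proof.
rewrite /Z count_map count_filter count_enum_sum.
by apply: eq_bigr => d _; rewrite andbC.
Qed.

Lemma low_count_mono i t : {homo low_count i t : V V' / V <= V'}.
Proof.
move=> V V' le_VV'; apply: leq_sum => d _.
by case: (d < t); case: ltnP => //= lt_V; rewrite (leq_trans lt_V le_VV').
Qed.

Lemma low_count_all i t : t <= n -> low_count i t n = t.
Proof.
move=> le_tn; transitivity (minn n t); last by lia.
by rewrite -sum_ord_lt; apply: eq_bigr => d _; rewrite ltn_ord andbT.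
Qed.

Lemma size_Z t i : t <= n -> size (Z pi t i) = t.
Proof.
move=> le_tn; rewrite -[RHS](low_count_all i le_tn) -count_Z_le.
apply/esym/eqP; rewrite -all_count; apply/allP => v.
by case/mapP => d _ ->; rewrite ltn_ord.
Qed.

Lemma low_countS i t V (lt_tn : t < n) :
  low_count i t.+1 V = low_count i t V + (pi (Ordinal lt_tn) i < V).
Proof.
rewrite /low_count (bigD1 (Ordinal lt_tn)) //= ltnSn /= addnC.
rewrite [in RHS](bigD1 (Ordinal lt_tn)) //= ltnn /= add0n; congr (_ + _).
apply: eq_bigr => d ne_d; rewrite ltnS leq_eqVlt.
by have /negbTE -> : val d != t by apply: contra ne_d => /eqP eq_d; apply/eqP/val_inj.
Qed.

Lemma sum_low_count t V : t <= n -> V <= n ->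
  \sum_i low_count i t V = t * V.
Proof.
move=> le_tn le_Vn; rewrite exchange_big /=.
transitivity (\sum_(d < n) (d < t) * V); last by rewrite -big_distrl sum_ord_lt (minn_idPr le_tn).
apply: eq_bigr => d _; case: (d < t); last by rewrite big1.
by rewrite mul1n sum_perm_lt; lia.
Qed.

Lemma balanced_low_count t i j : balanced pi -> 1 <= t <= n -> 1 <= j <= t ->
  j <= low_count i t (ceil_div (j * n) t).
Proof.
move=> bal_pi t_range j_range.
rewrite -count_Z_le -(count_sort leq); apply: sorted_nth_le_count.
- exact: (sort_sorted leq_total).
- by rewrite size_sort size_Z; lia.
- exact: bal_pi.
Qed.

End LowCount.

Section Obstruction.

Variables (n : nat) (pi : perm_seq n).
Hypotheses (bal_pi : balanced pi) (n_gt3 : 3 < n).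

Let a := ceil_div n 4.
Let b := ceil_div n 3.
Let w := ceil_div (2 * n) 4.
Let day3 : 'I_n := Ordinal (ltnW n_gt3).
Let day4 : 'I_n := Ordinal n_gt3.

Let le_a_b : a <= b. Proof. by rewrite /a /b /ceil_div; lia. Qed.
Let le_a_w : a <= w. Proof. by rewrite /a /w /ceil_div; lia. Qed.

Lemma excess_of_day3_middle i : a <= pi day3 i < b ->
  (1 < low_count pi i 3 b) || (2 < low_count pi i 4 w).
Proof.
case/andP=> a_le lt_b.
have low2 := balanced_low_count i (t := 2) (j := 1) bal_pi ltac:(lia) ltac:(lia).
have low4 := balanced_low_count i (t := 4) (j := 1) bal_pi ltac:(lia) ltac:(lia).
rewrite !mul1n -/a in low2 low4.
have le_half_w : ceil_div n 2 <= w by rewrite /w /ceil_div; lia.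
have lt_w : pi day3 i < w by rewrite /w /b /ceil_div in lt_b *; lia.
have mono_b := low_count_mono pi i 2 le_a_b.
have mono_w := low_count_mono pi i 2 le_half_w.
have := low_countS pi i a (ltnW n_gt3); have := low_countS pi i b (ltnW n_gt3).
have := low_countS pi i w (ltnW n_gt3).
have := low_countS pi i a n_gt3; have := low_countS pi i w n_gt3.
rewrite -/day3 -/day4 lt_b lt_w [pi day3 i < a]ltnNge a_le.
case: (ltnP (pi day4 i) a) => [lt_a|_]; last by move=> *; apply/orP; lia.
by rewrite (leq_trans lt_a le_a_w) => *; apply/orP; lia.
Qed.

Lemma day3_middle_le_excess : b - a <= (3 * b - n) + (4 * w - 2 * n).
Proof.
have perm_middle : \sum_i (a <= pi day3 i < b) = b - a.
  have split_lt_b : \sum_i (pi day3 i < b) = \sum_i (pi day3 i < a) + \sum_i (a <= pi day3 i < b).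
    rewrite -big_split /=; apply: eq_bigr => i _.
    by case: (ltnP (pi day3 i) a) => ?; case: (ltnP (pi day3 i) b) => ? /=; lia.
  by move: split_lt_b; rewrite !sum_perm_lt /a /b /ceil_div; lia.
have excess3 : \sum_i (1 < low_count pi i 3 b) <= 3 * b - n.
  apply: leq_trans (sum_gt_le (j := 1) _) _ => [i|].
    by have := balanced_low_count i (t := 3) (j := 1) bal_pi; rewrite mul1n; apply; lia.
  by rewrite sum_low_count ?card_ord ?muln1 // /b /ceil_div; lia.
have excess4 : \sum_i (2 < low_count pi i 4 w) <= 4 * w - 2 * n.
  apply: leq_trans (sum_gt_le (j := 2) _) _ => [i|].
    by apply: (balanced_low_count i (t := 4) (j := 2) bal_pi); lia.
  by rewrite sum_low_count ?card_ord 1?mulnC // /w /ceil_div; lia.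
rewrite -perm_middle; apply: leq_trans (leq_add excess3 excess4).
rewrite -big_split /=; apply: leq_sum => i _.
case: (boolP (a <= pi day3 i < b)) => // /excess_of_day3_middle.
by case/orP => ->; rewrite ?leq_addr ?leq_addl.
Qed.

End Obstruction.

Lemma no_balanced n : 61 < n -> forall pi : perm_seq n, ~ balanced pi.
Proof.
move=> n_gt61 pi bal_pi.
have := day3_middle_le_excess bal_pi (_ : 3 < n); rewrite /ceil_div; lia.
Qed.

Theorem mainTheorem4 :
  (forall n : nat, 61 < n -> forall pi : perm_seq n, ~ balanced pi) /\
  (exists B : nat, forall n : nat, 0 < n ->
     (exists pi : perm_seq n, balanced pi) -> n <= B).
Proof.
split; first exact: no_balanced.
exists 61 => n _ [pi bal_pi].
by case: leqP => // /no_balanced /(_ pi).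
Qed.
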